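(* Let $\varepsilon\in(0,\varepsilon_0]$. Then for every $\alpha$ with $0<\alpha\le\varepsilon(1-\omega\varepsilon)$, one has $\mathbb D_\varepsilon\subset\mathbb D_\alpha$.
   Context: Let $\mathfrak I=(a,b)\subset\mathbb R$ be a bounded interval, $\mathcal H=L^2(\mathfrak I)$ with inner product $\langle\cdot,\cdot\rangle$ and norm $\|\cdot\|$. Let $A=-\partial_{xx}$ with domain $H^2(\mathfrak I)\cap H^1_0(\mathfrak I)$, $\lambda_1>0$ its first eigenvalue, $\mathcal H^r=D(A^{r/2})$, $\|u\|_r=\|A^{r/2}u\|$, $B=I+A$, and on $\mathcal H^r$ the inner product $(u,v)_r=\langle A^{(r-1)/2}B^{1/2}u,A^{(r-1)/2}B^{1/2}v\rangle$ with norm $|||u|||_r^2=\|u\|_{r-1}^2+\|u\|_r^2$. Set $\omega=\sqrt{(1+\lambda_1)/\lambda_1}$. Let $\mu:(0,\infty)\to[0,\infty)$, $\mu\not\equiv0$, nonincreasing, absolutely continuous, with $\kappa:=\int_0^\infty\mu(s)\,ds\in(0,\infty)$, $\int_0^\infty s\mu(s)\,ds=1$, $\lim_{s\to0^+}\mu(s)<\infty$, and $\mu'+\delta\mu\le0$ a.e. for some $\delta>0$. $\mathcal M=L^2_\mu(\mathbb R^+;\mathcal H^1)$ with norm $\|\eta\|_{\mathcal M}^2=\int_0^\infty\mu(s)\|\eta(s)\|_1^2ds$; $\mathbf H=\mathcal H^1\times\mathcal M$ with $\|(u,\eta)\|_{\mathbf H}^2=|||u|||_1^2+\|\eta\|_{\mathcal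 M}^2$. $T\eta=-\partial_s\eta$ with domain $\{\eta\in\mathcal M:\partial_s\eta\in\mathcal M,\ \lim_{s\to0}\|\eta(s)\|_1=0\}$. For $f\in L^2(\mathfrak I)$, $S(t)$ is the strongly continuous semigroup on $\mathbf H$ generated by $Bu_t+u_x+\int_0^\infty\mu(s)A\eta(s)\,ds+uu_x=f$, $\eta_t=T\eta+u$ (Dirichlet conditions on $u$), $S(t)z=(u(t),\eta^t)$. Let $F(x)=\int_a^xf(y)\,dy$ and for $\varepsilon>0$, $z=(u,\eta)\in\mathbf H$, $$\Lambda_\varepsilon(z)=\|z\|_{\mathbf H}^2+\frac2\kappa\int_0^\infty\mu(s)\langle F,\eta_x(s)\rangle\,ds+\frac2\kappa\|F\|^2-\frac{\varepsilon}{\sqrt\kappa}\int_0^\infty\mu(s)(u,\eta(s))_1\,ds.$$ Let $c_1,c_2,c_3>0$ and $\varepsilon_0\in(0,\frac1{2\omega})$ be constants depending only on $\mathfrak I,\mu$ such that for every $z\in\mathbf H$ and $\varepsilon\in(0,\varepsilon_0]$, $\mathcal L_\varepsilon(t)=\Lambda_\varepsilon(S(t)z)$ satisfies $\mathcal L_\varepsilon'+\varepsilon c_1\mathcal L_\varepsilon\le c_2\|F\|^2+c_3\varepsilon^2\mathcal L_\varepsilon^2$ for all $t\ge0$. Standing assumption: $\|F\|<\frac{c_1}{2\sqrt{c_2c_3}}$. Set $c_*=\sqrt{c_2/c_3}\,\big(\frac{c_1}{\sqrt{c_2c_3}}-\|F\|\big)>0$ and, for $\varepsilon>0$, $\mathbb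 D_\varepsilon=\{z\in\mathbf H:\Lambda_\varepsilon(z)\le c_*/\varepsilon\}$. *)

From HB Require Import structures.
From mathcomp Require Import all_boot all_order all_algebra.
From mathcomp Require Import all_classical all_reals all_analysis.
Set Implicit Arguments. Unset Strict Implicit. Unset Printing Implicit Defensive.
Import Order.TTheory GRing.Theory Num.Theory.
Import numFieldNormedType.Exports.
Local Open Scope classical_set_scope.
Local Open Scope ring_scope.

Section Defs.
Variable R : realType.
Local Notation leb := (@lebesgue_measure R).

Definition L2 (a b : R) (g : R -> R) : Prop :=
  measurable_fun `[a, b] g /\
  (\int[leb]_(x in `[a, b]) ((g x) ^+ 2)%:E < +oo)%E.

Definition ip (a b : R) (g h : R -> R) : R := Rintegral leb `[a, b] (fun x => g x * h x).
Definition nrm2 (a b : R) (g : R -> R) : R := ip a b g g.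

(* u is in H^1 = D(A^{1/2}) = H^1_0(a,b), with (weak) derivative du:
   u is the primitive of an L^2 function du vanishing at a and b. *)
Definition H10 (a b : R) (u du : R -> R) : Prop :=
  L2 a b du /\
  (forall x, a <= x <= b -> u x = Rintegral leb `[a, x] du) /\
  Rintegral leb `[a, b] du = 0.

(* |||u|||_1^2 = ||u||_0^2 + ||u||_1^2, with ||u||_1 = ||A^{1/2} u|| = ||u_x|| *)
Definition tnorm1sq (a b : R) (u du : R -> R) : R := nrm2 a b u + nrm2 a b du.

(* (u,v)_1 = <B^{1/2}u, B^{1/2}v> = <u,v> + <u_x,v_x> *)
Definition ip1 (a b : R) (u du v dv : R -> R) : R := ip a b u v + ip a b du dv.

(* first eigenvalue of -d^2/dx^2 with Dirichlet conditions on (a,b) *)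
Definition lambda1 (a b : R) : R := (pi / (b - a)) ^+ 2.
Definition omega (a b : R) : R := Num.sqrt ((1 + lambda1 a b) / lambda1 a b).

Definition kappa (mu : R -> R) : R := Rintegral leb `]0, +oo[ mu.

Definition primF (a : R) (f : R -> R) : R -> R := fun x => Rintegral leb `[a, x] f.

(* A point z = (u, eta) of H = H^1 x M, given by representatives:
   u with derivative du, and eta(s) with derivative deta(s) for s > 0. *)
Record state := State {
  st_u : R -> R; st_du : R -> R;
  st_eta : R -> R -> R; st_deta : R -> R -> R }.

Definition normMsq (mu : R -> R) (a b : R) (z : state) : R :=
  Rintegral leb `]0, +oo[ (fun s => mu s * nrm2 a b (st_deta z s)).

(* membership z in H = H^1 x L^2_mu(R^+; H^1) *)
Definition inH (mu : R -> R) (a b : R) (z : state) : Prop :=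
  H10 a b (st_u z) (st_du z) /\
  (forall s, 0 < s -> H10 a b (st_eta z s) (st_deta z s)) /\
  measurable_fun ([set s : R | 0 < s] `*` `[a, b]) (fun p : R * R => st_eta z p.1 p.2) /\
  measurable_fun ([set s : R | 0 < s] `*` `[a, b]) (fun p : R * R => st_deta z p.1 p.2) /\
  (\int[leb]_(s in `]0%R, +oo[) (mu s * nrm2 a b (st_deta z s))%:E < +oo)%E.

Definition normHsq (mu : R -> R) (a b : R) (z : state) : R :=
  tnorm1sq a b (st_u z) (st_du z) + normMsq mu a b z.

Definition Lambda (mu : R -> R) (a b : R) (f : R -> R) (eps : R) (z : state) : R :=
  let F := primF a f in
  let k := kappa mu in
  normHsq mu a b z
  + 2 / k * Rintegral leb `]0, +oo[ (fun s => mu s * ip a b F (st_deta z s))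
  + 2 / k * nrm2 a b F
  - eps / Num.sqrt k *
      Rintegral leb `]0, +oo[
        (fun s => mu s * ip1 a b (st_u z) (st_du z) (st_eta z s) (st_deta z s)).

Definition normF (a b : R) (f : R -> R) : R := Num.sqrt (nrm2 a b (primF a f)).

Definition cstar (a b : R) (f : R -> R) (c1 c2 c3 : R) : R :=
  Num.sqrt (c2 / c3) * (c1 / Num.sqrt (c2 * c3) - normF a b f).

Definition Dset (mu : R -> R) (a b : R) (f : R -> R) (c1 c2 c3 eps : R) : set state :=
  [set z | inH mu a b z /\ Lambda mu a b f eps z <= cstar a b f c1 c2 c3 / eps].

Definition abs_cont_on (g : R -> R) (x y : R) : Prop :=
  forall e, 0 < e -> exists2 d, 0 < d &
    forall n (ab : 'I_n -> R * R),
      (forall i, x <= (ab i).1 <= (ab i).2 /\ (ab i).2 <= y) ->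
      (forall i j : 'I_n, (i < j)%N -> (ab i).2 <= (ab j).1) ->
      \sum_(i < n) ((ab i).2 - (ab i).1) < d ->
      \sum_(i < n) `|g (ab i).2 - g (ab i).1| < e.

Definition kernel_ok (mu : R -> R) (delta : R) : Prop :=
  (forall s, 0 < s -> 0 <= mu s) /\
  (forall s t, 0 < s -> s <= t -> mu t <= mu s) /\
  (forall x y, 0 < x -> x <= y -> abs_cont_on mu x y) /\
  leb.-integrable `]0, +oo[ (fun s => (mu s)%:E) /\ 0 < kappa mu /\
  leb.-integrable `]0, +oo[ (fun s => (s * mu s)%:E) /\
  Rintegral leb `]0, +oo[ (fun s => s * mu s) = 1 /\
  (exists l : R, mu x @[x --> 0^'+] --> l) /\
  0 < delta /\
  {ae leb, forall s, 0 < s -> derivable mu s 1 /\ derive1 mu s + delta * mu s <= 0}.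

End Defs.

(* Write [Lambda_eps z = Lambda_0 z - eps J z], where [J = coupling] is the memory term
   [kappa^{-1/2} \int mu(s) (u, eta(s))_1 ds].  Then
   [eps Lambda_eps - alpha Lambda_alpha = (eps - alpha) (Lambda_0 - (eps + alpha) J)],
   so [alpha Lambda_alpha <= eps Lambda_eps <= c_*] as soon as
   [(eps + alpha) |J| <= Lambda_0].  Young's inequality gives
   [Lambda_0 >= |||u|||_1^2 + ||eta||_M^2 / 2], and together with a Poincare
   inequality [|||v|||_1^2 <= (1 + K) ||v||_1^2] it gives
   [(eps + alpha) |J| <= |||u|||_1^2 + (1 + K) (eps + alpha)^2 ||eta||_M^2 / 4].
   Finally [alpha <= eps (1 - omega eps)] and [omega eps < 1/2] force
   [omega (eps + alpha) <= 3/4], hence [(1 + K) (eps + alpha)^2 <= 2]. *)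

From HB Require Import structures.
From mathcomp Require Import all_boot all_order all_algebra.
From mathcomp Require Import all_classical all_reals all_analysis.
From mathcomp Require Import ring lra measurable_realfun.
Import Order.TTheory GRing.Theory Num.Theory.
Import numFieldNormedType.Exports.
Local Open Scope classical_set_scope.
Local Open Scope ring_scope.

Notation Rintegrable mu D f := (mu.-integrable D (EFin \o f)).

Lemma normrM_le_young {R : realFieldType} (x y t : R) : 0 < t ->
  `|x * y| <= (t * x ^+ 2 + y ^+ 2 / t) / 2.
Proof.
move=> t0; rewrite normrM -(real_normK (num_real x)) -(real_normK (num_real y)).
have := normr_ge0 x; have := normr_ge0 y.
move: `|x| `|y| => X Y X0 Y0.
have sq0 : 0 <= (t * X - Y) ^+ 2 / t by rewrite divr_ge0 ?sqr_ge0 ?ltW.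
have -> : (t * X ^+ 2 + Y ^+ 2 / t) / 2 = X * Y + (t * X - Y) ^+ 2 / t / 2.
  by field; rewrite gt_eqF.
lra.
Qed.

Section real_integrals.
Context d (T : measurableType d) (R : realType) (mu : {measure set T -> \bar R}).
Implicit Types (D E : set T) (f g h : T -> R).

Lemma RintegrableD D f g : measurable D ->
  Rintegrable mu D f -> Rintegrable mu D g -> Rintegrable mu D (fun x => f x + g x).
Proof.
by move=> mD If Ig; apply: eq_integrable (integrableD mD If Ig).
Qed.

Lemma RintegrableZl D f k : measurable D ->
  Rintegrable mu D f -> Rintegrable mu D (fun x => k * f x).
Proof.
by move=> mD If; apply: eq_integrable (integrableZl mD k If).
Qed.

Lemma Rintegrable_cst D c : measurable D -> (mu D < +oo)%E ->
  Rintegrable mu D (fun _ => c).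
Proof.
move=> mD muD; apply/integrableP; split; first exact/measurable_EFinP.
by rewrite integral_cst// lte_mul_pinfty.
Qed.

Lemma le_Rintegrable D f g : measurable D -> measurable_fun D f ->
  (forall x, D x -> `|f x| <= g x) -> Rintegrable mu D g -> Rintegrable mu D f.
Proof.
move=> mD mf fg Ig; apply: le_integrable Ig => //; first exact/measurable_EFinP.
by move=> x Dx /=; rewrite lee_fin (le_trans (fg x Dx)) ?ler_norm.
Qed.

Lemma ge0_le_integral_nomeas D (f g : T -> \bar R) :
  (forall x, D x -> (0 <= f x)%E) -> (forall x, D x -> (f x <= g x)%E) ->
  (\int[mu]_(x in D) f x <= \int[mu]_(x in D) g x)%E.
Proof.
move=> f0 fg; rewrite !ge0_integralE//; last first.
  by move=> x Dx; exact: le_trans (f0 x Dx) (fg x Dx).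
apply: ereal_sup_le => _ [h /= hf <-]; exists h => //= x.
apply: le_trans (hf x) _; rewrite /patch; case: ifPn => [/set_mem Dx|_]//.
exact: fg.
Qed.

(* [g] need not be measurable: this is applied to integrands such as
   [s |-> mu s * <F, eta_x(s)>], whose measurability in [s] is not assumed. *)
Lemma normr_Rintegral_le D g h : measurable D ->
  Rintegrable mu D h -> (forall x, D x -> `|g x| <= h x) ->
  `|\int[mu]_(x in D) g x| <= \int[mu]_(x in D) h x.
Proof.
move=> mD Ih gh.
have h0 x : D x -> 0 <= h x by move=> Dx; exact: le_trans (normr_ge0 _) (gh x Dx).
have Ifin := integrable_fin_num mD Ih.
have I0 : (0 <= \int[mu]_(x in D) (h x)%:E)%E.
  by apply: integral_ge0 => x Dx; rewrite lee_fin h0.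
have posI : (\int[mu]_(x in D) (EFin \o g)^\+ x <= \int[mu]_(x in D) (h x)%:E)%E.
  apply: ge0_le_integral_nomeas => x Dx //.
  rewrite funeposE /= ge_max !lee_fin h0 // andbT.
  exact: le_trans (ler_norm _) (gh x Dx).
have negI : (\int[mu]_(x in D) (EFin \o g)^\- x <= \int[mu]_(x in D) (h x)%:E)%E.
  apply: ge0_le_integral_nomeas => x Dx //.
  rewrite funenegE /= ge_max !lee_fin h0 // andbT.
  by apply: le_trans (gh x Dx); rewrite -normrN ler_norm.
have pos0 : (0 <= \int[mu]_(x in D) (EFin \o g)^\+ x)%E.
  by apply: integral_ge0 => x _; exact: funepos_ge0.
have neg0 : (0 <= \int[mu]_(x in D) (EFin \o g)^\- x)%E.
  by apply: integral_ge0 => x _; exact: funeneg_ge0.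
rewrite /Rintegral integralE.
move: posI negI pos0 neg0 Ifin I0.
move: (\int[mu]_(x in D) _)%E (\int[mu]_(x in D) _)%E (\int[mu]_(x in D) _)%E.
move=> [P| |] [N| |] [I| |] //=; rewrite ?lee_fin => *.
by apply/ler_normlP; split; lra.
Qed.

Lemma ge0_le_Rintegral_subset D E f : measurable D -> measurable E -> D `<=` E ->
  (forall x, E x -> 0 <= f x) -> Rintegrable mu E f ->
  \int[mu]_(x in D) f x <= \int[mu]_(x in E) f x.
Proof.
move=> mD mE DE f0 If; have ID := integrableS mE mD DE If.
rewrite /Rintegral fine_le ?integrable_fin_num //.
by apply: ge0_subset_integral => //; case/integrableP: If.
Qed.

(* Cauchy-Schwarz against [1]; the positive bound [l] on [mu D] avoids
   dividing by a null measure. *)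
Lemma Rintegral_sqr_le D g l : measurable D -> (mu D < +oo)%E ->
  fine (mu D) <= l -> 0 < l ->
  Rintegrable mu D g -> Rintegrable mu D (fun x => g x * g x) ->
  (\int[mu]_(x in D) g x) ^+ 2 <= l * \int[mu]_(x in D) (g x * g x).
Proof.
move=> mD Dfin Dl l0 Ig Igg.
set G := \int[mu]_(x in D) g x; set N := \int[mu]_(x in D) (g x * g x).
set c := G / l.
have quad : N - 2 * c * G + c ^+ 2 * fine (mu D) =
    \int[mu]_(x in D) ((g x - c) ^+ 2).
  have -> : \int[mu]_(x in D) ((g x - c) ^+ 2) =
      \int[mu]_(x in D) (g x * g x + (- (2 * c) * g x + c ^+ 2)).
    by apply: eq_Rintegral => x _; ring.
  rewrite RintegralD //; last first.
    by apply: RintegrableD => //; [exact: RintegrableZl|exact: Rintegrable_cst].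
  rewrite RintegralD //; [|exact: RintegrableZl|exact: Rintegrable_cst].
  by rewrite RintegralZl // Rintegral_cst // -/G -/N; ring.
have quad0 : 0 <= N - 2 * c * G + c ^+ 2 * fine (mu D).
  by rewrite quad; apply: Rintegral_ge0 => x _; exact: sqr_ge0.
have cl : c ^+ 2 * fine (mu D) <= c ^+ 2 * l by rewrite ler_wpM2l ?sqr_ge0.
rewrite -subr_ge0 (_ : l * N - G ^+ 2 = l * (N - 2 * c * G + c ^+ 2 * l)).
  by apply: mulr_ge0; [exact: ltW|lra].
by rewrite /c; field; rewrite gt_eqF.
Qed.

Lemma normr_Rintegral_le_wsum D (w n g : T -> R) c0 c1 :
  measurable D -> Rintegrable mu D w -> Rintegrable mu D (fun s => w s * n s) ->
  (forall s, D s -> `|g s| <= c0 * w s + c1 * (w s * n s)) ->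
  `|\int[mu]_(s in D) g s| <=
    c0 * \int[mu]_(s in D) w s + c1 * \int[mu]_(s in D) (w s * n s).
Proof.
move=> mD Iw Iwn gb.
apply: le_trans
  (@normr_Rintegral_le D g (fun s => c0 * w s + c1 * (w s * n s)) mD _ gb) _.
  by apply: RintegrableD => //; exact: RintegrableZl.
by rewrite RintegralD ?RintegralZl //; exact: RintegrableZl.
Qed.

End real_integrals.

Arguments le_Rintegrable {d T R} mu {D f} g.
Arguments normr_Rintegral_le {d T R} mu {D g} h.
Arguments Rintegral_sqr_le {d T R mu D g l}.

Section L2_interval.
Context {R : realType}.
Local Notation leb := (@lebesgue_measure R).
Implicit Types (a b x y : R) (g h : R -> R).

Lemma lebesgue_itv_lty x y bl br :
  (leb [set` Interval (BSide bl x) (BSide br y)] < +oo)%E.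
Proof. by rewrite lebesgue_measure_itv; case: ifP => //= _; rewrite -EFinD ltey. Qed.

Lemma fine_lebesgue_itv x y bl br : x <= y ->
  fine (leb [set` Interval (BSide bl x) (BSide br y)]) = y - x.
Proof.
rewrite lebesgue_measure_itv /= lte_fin le_eqVlt => /predU1P[<-|->]//=.
by rewrite ltxx subrr.
Qed.

Lemma L2_sqr_integrable {a b g} : L2 a b g -> Rintegrable leb `[a, b] (fun x => g x * g x).
Proof.
move=> [mg fg]; apply/integrableP; split.
  by apply/measurable_EFinP; exact: measurable_funM.
apply: le_lt_trans fg; apply: ge0_le_integral_nomeas => x _ /=.
  by rewrite lee_fin normr_ge0.
by rewrite ger0_norm // sqr_ge0.
Qed.

Lemma L2_of_sqr_integrable a b g : measurable_fun `[a, b] g ->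
  Rintegrable leb `[a, b] (fun x => g x * g x) -> L2 a b g.
Proof.
move=> mg /integrableP [_ Ig]; split => //.
apply: le_lt_trans Ig; apply: ge0_le_integral_nomeas => x _ /=.
  by rewrite lee_fin sqr_ge0.
by rewrite ger0_norm // sqr_ge0.
Qed.

Lemma L2_integrable {a b g} : L2 a b g -> Rintegrable leb `[a, b] g.
Proof.
move=> Lg; have [mg _] := Lg.
apply: (le_Rintegrable leb (fun x => 1 + g x * g x)) => //.
  move=> x _; rewrite -expr2; have [g1|g1] := lerP `|g x| 1.
    by apply: le_trans g1 _; rewrite lerDl sqr_ge0.
  by rewrite -(real_normK (num_real (g x))); nra.
apply: RintegrableD => //; last exact: L2_sqr_integrable.
exact: Rintegrable_cst (lebesgue_itv_lty _ _ _ _).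
Qed.

Lemma nrm2_ge0 a b g : 0 <= nrm2 a b g.
Proof. by apply: Rintegral_ge0 => x _; rewrite -expr2 sqr_ge0. Qed.

Lemma ip_le_young {a b g h t} : L2 a b g -> L2 a b h -> 0 < t ->
  `|ip a b g h| <= (t * nrm2 a b g + nrm2 a b h / t) / 2.
Proof.
move=> Lg Lh t0; have Igg := L2_sqr_integrable Lg; have Ihh := L2_sqr_integrable Lh.
pose w x := t / 2 * (g x * g x) + 1 / (2 * t) * (h x * h x).
have -> : (t * nrm2 a b g + nrm2 a b h / t) / 2 = \int[leb]_(x in `[a, b]) w x.
  rewrite /w RintegralD ?RintegralZl //; try exact: RintegrableZl.
  by rewrite /nrm2 /ip; field; rewrite gt_eqF.
apply: normr_Rintegral_le => // [|x _].
  by apply: RintegrableD => //; exact: RintegrableZl.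
have -> : w x = (t * g x ^+ 2 + h x ^+ 2 / t) / 2 by rewrite /w; field; rewrite gt_eqF.
exact: normrM_le_young.
Qed.

Lemma L2_primitive {a b g G} : a < b -> L2 a b g ->
  (forall x, a <= x <= b -> G x = \int[leb]_(t in `[a, x]) g t) -> L2 a b G.
Proof.
move=> ab Lg GE; have Ig := L2_integrable Lg.
have mG : measurable_fun `[a, b] G.
  apply: (eq_measurable_fun (fun x => parameterized_integral leb a x g)).
    by move=> x /set_mem /=; rewrite in_itv /= => xab; rewrite GE.
  apply: subspace_continuous_measurable_fun => //.
  exact: parameterized_integral_continuous (ltW ab) Ig.
pose M := \int[leb]_(t in `[a, b]) `|g t|.
apply: L2_of_sqr_integrable => //.
apply: (le_Rintegrable leb (fun _ => M ^+ 2)) => //.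
- exact: measurable_funM.
- move=> x /=; rewrite in_itv /= => /andP[ax xb].
  rewrite -expr2 ger0_norm ?sqr_ge0 // GE ?ax ?xb //.
  set I := \int[leb]_(t in `[a, x]) g t.
  have IM : `|I| <= M.
    have sub : `[a, x] `<=` `[a, b] by apply: subset_itvl; rewrite bnd_simp.
    apply: le_trans (le_normr_Rintegral _ _) _ => //; first exact: integrableS Ig.
    apply: ge0_le_Rintegral_subset => //; exact: integrable_norm.
  by rewrite -(real_normK (num_real I)) lerXn2r // nnegrE (le_trans _ IM).
- exact: Rintegrable_cst (lebesgue_itv_lty _ _ _ _).
Qed.

Lemma H10_L2 {a b u du} : a < b -> H10 a b u du -> L2 a b u.
Proof. by move=> ab [Ldu [uE _]]; exact: L2_primitive ab Ldu uE. Qed.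

Lemma Rintegral_itv_le_bound x y bl br f M : x <= y ->
  Rintegrable leb [set` Interval (BSide bl x) (BSide br y)] f ->
  (forall t, [set` Interval (BSide bl x) (BSide br y)] t -> f t <= M) ->
  \int[leb]_(t in [set` Interval (BSide bl x) (BSide br y)]) f t <= M * (y - x).
Proof.
move=> xy If fM; rewrite -(fine_lebesgue_itv _ _ bl br xy) -Rintegral_cst //.
apply: le_Rintegral => //; exact: Rintegrable_cst (lebesgue_itv_lty _ _ _ _).
Qed.

End L2_interval.

(* Obtained by Cauchy-Schwarz on the quarters of [[a, b]]; it is cruder than the
   sharp [1 / lambda1 = ((b - a) / pi)^2], but any constant up to [2 (b - a)^2 / 9]
   is enough, since [pi < 4]. *)
Definition poincare_const {R : realType} (a b : R) : R := 3 * (b - a) ^+ 2 / 16.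

Section poincare.
Context {R : realType}.
Local Notation leb := (@lebesgue_measure R).
Variables (a b : R) (u du : R -> R).
Hypothesis Hu : H10 a b u du.

Let Idu : Rintegrable leb `[a, b] du := L2_integrable Hu.1.
Let Idd : Rintegrable leb `[a, b] (fun t => du t * du t) := L2_sqr_integrable Hu.1.

Let sqr_le_Rintegral (D E : set R) l : measurable D -> measurable E ->
  D `<=` E -> E `<=` `[a, b] -> (leb D < +oo)%E -> fine (leb D) <= l -> 0 < l ->
  (\int[leb]_(t in D) du t) ^+ 2 <= l * \int[leb]_(t in E) (du t * du t).
Proof.
move=> mD mE DE Eab Dfin Dl l0; have Dab := subset_trans DE Eab.
apply: le_trans (Rintegral_sqr_le (mu := leb) mD Dfin Dl l0 _ _) _.
- exact: integrableS Idu.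
- exact: integrableS Idd.
rewrite ler_pM2l //; apply: ge0_le_Rintegral_subset => //.
- by move=> t _; rewrite -expr2 sqr_ge0.
- exact: integrableS Idd.
Qed.

Lemma H10_sqr_le_left l x y : 0 < l -> a <= x -> x <= y -> y <= b -> x - a <= l ->
  u x ^+ 2 <= l * \int[leb]_(t in `[a, y]) (du t * du t).
Proof.
move=> l0 ax xy yb xl; have [_ [uE _]] := Hu.
rewrite uE ?ax ?(le_trans xy yb) //.
apply: (sqr_le_Rintegral `[a, x] `[a, y]) => //.
- by apply: subset_itvl; rewrite bnd_simp.
- by apply: subset_itvl; rewrite bnd_simp.
- exact: lebesgue_itv_lty.
- by rewrite fine_lebesgue_itv.
Qed.

Lemma H10_sqr_le_right l x y : 0 < l -> a <= y -> y <= x -> x <= b -> b - x <= l ->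
  u x ^+ 2 <= l * \int[leb]_(t in `]y, b]) (du t * du t).
Proof.
move=> l0 ay yx xb xl; have [_ [uE u0]] := Hu.
have ax := le_trans ay yx.
have -> : u x ^+ 2 = (\int[leb]_(t in `]x, b]) du t) ^+ 2.
  rewrite -(@Rintegral_itvB _ du (BLeft a) (BRight b) x Idu) ?bnd_simp //.
  by rewrite u0 -uE ?ax ?xb // sub0r sqrrN.
apply: (sqr_le_Rintegral `]x, b] `]y, b]) => //.
- by apply: subset_itvr; rewrite bnd_simp.
- by apply: subset_itvr; rewrite bnd_simp.
- exact: lebesgue_itv_lty.
- by rewrite fine_lebesgue_itv.
Qed.

(* With [l = (m - a) / 2], Cauchy-Schwarz from [a] gives [u^2 <= l ||du||^2]
   on [[a, a + l]] and [u^2 <= 2 l ||du||^2] on [[a + l, m]]. *)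
Lemma H10_Rintegral_sqr_le_left_half m : a < m -> m <= b ->
  \int[leb]_(t in `[a, m]) (u t * u t) <=
    3 * ((m - a) / 2) ^+ 2 * \int[leb]_(t in `[a, m]) (du t * du t).
Proof.
move=> am mb; have Iuu := L2_sqr_integrable (H10_L2 (lt_le_trans am mb) Hu).
set l := (m - a) / 2; set q := a + l.
set N := \int[leb]_(t in `[a, m]) (du t * du t).
have l0 : 0 < l by rewrite divr_gt0 // subr_gt0.
have qE : q = a + l by [].
have mE : m = a + 2 * l by rewrite /l; field.
have Ium : Rintegrable leb `[a, m] (fun t => u t * u t).
  by apply: integrableS Iuu => //; apply: subset_itvl; rewrite bnd_simp.
have split : \int[leb]_(t in `[a, m]) (u t * u t) - \int[leb]_(t in `[a, q]) (u t * u t)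
    = \int[leb]_(t in `]q, m]) (u t * u t).
  by apply: Rintegral_itvB; rewrite // bnd_simp; lra.
have near : \int[leb]_(t in `[a, q]) (u t * u t) <= l * N * (q - a).
  apply: Rintegral_itv_le_bound => [||x /=]; first lra.
    by apply: integrableS Ium => //; apply: subset_itvl; rewrite bnd_simp; lra.
  by rewrite in_itv /= => /andP[ax xq]; apply: H10_sqr_le_left => //; lra.
have far : \int[leb]_(t in `]q, m]) (u t * u t) <= 2 * l * N * (m - q).
  apply: Rintegral_itv_le_bound => [||x /=]; first lra.
    by apply: integrableS Ium => //; apply: subset_itvr; rewrite bnd_simp; lra.
  by rewrite in_itv /= => /andP[qx xm]; apply: H10_sqr_le_left => //; lra.
rewrite (_ : q - a = l) in near; last by lra.
rewrite (_ : m - q = l) in far; last by lra.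
have -> : 3 * l ^+ 2 * N = l * N * l + 2 * l * N * l by ring.
lra.
Qed.

Lemma H10_Rintegral_sqr_le_right_half m : a <= m -> m < b ->
  \int[leb]_(t in `]m, b]) (u t * u t) <=
    3 * ((b - m) / 2) ^+ 2 * \int[leb]_(t in `]m, b]) (du t * du t).
Proof.
move=> am mb; have Iuu := L2_sqr_integrable (H10_L2 (le_lt_trans am mb) Hu).
set l := (b - m) / 2; set q := m + l.
set N := \int[leb]_(t in `]m, b]) (du t * du t).
have l0 : 0 < l by rewrite divr_gt0 // subr_gt0.
have qE : q = m + l by [].
have bE : b = m + 2 * l by rewrite /l; field.
have Imb : Rintegrable leb `]m, b] (fun t => u t * u t).
  by apply: integrableS Iuu => //; apply: subset_itvr; rewrite bnd_simp.
have split : \int[leb]_(t in `]m, b]) (u t * u t) - \int[leb]_(t in `]m, q]) (u t * u t)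
    = \int[leb]_(t in `]q, b]) (u t * u t).
  by apply: Rintegral_itvB; rewrite // bnd_simp; lra.
have far : \int[leb]_(t in `]m, q]) (u t * u t) <= 2 * l * N * (q - m).
  apply: Rintegral_itv_le_bound => [||x /=]; first lra.
    by apply: integrableS Imb => //; apply: subset_itvl; rewrite bnd_simp; lra.
  by rewrite in_itv /= => /andP[mx xq]; apply: H10_sqr_le_right => //; lra.
have near : \int[leb]_(t in `]q, b]) (u t * u t) <= l * N * (b - q).
  apply: Rintegral_itv_le_bound => [||x /=]; first lra.
    by apply: integrableS Imb => //; apply: subset_itvr; rewrite bnd_simp; lra.
  by rewrite in_itv /= => /andP[qx xb]; apply: H10_sqr_le_right => //; lra.
rewrite (_ : b - q = l) in near; last by lra.
rewrite (_ : q - m = l) in far; last by lra.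
have -> : 3 * l ^+ 2 * N = l * N * l + 2 * l * N * l by ring.
lra.
Qed.

Lemma H10_poincare : a < b -> nrm2 a b u <= poincare_const a b * nrm2 a b du.
Proof.
move=> ab; have Iuu := L2_sqr_integrable (H10_L2 ab Hu).
set m := (a + b) / 2.
have [am mb] : a < m /\ m < b by rewrite /m; split; lra.
have splitu : \int[leb]_(t in `[a, b]) (u t * u t) - \int[leb]_(t in `[a, m]) (u t * u t)
    = \int[leb]_(t in `]m, b]) (u t * u t).
  by apply: Rintegral_itvB; rewrite // bnd_simp; lra.
have splitdu : \int[leb]_(t in `[a, b]) (du t * du t) - \int[leb]_(t in `[a, m]) (du t * du t)
    = \int[leb]_(t in `]m, b]) (du t * du t).
  by apply: Rintegral_itvB; rewrite // bnd_simp; lra.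
have left := H10_Rintegral_sqr_le_left_half _ am (ltW mb).
have right := H10_Rintegral_sqr_le_right_half _ (ltW am) mb.
rewrite (_ : (b - m) / 2 = (m - a) / 2) in right; last by rewrite /m; field.
rewrite /poincare_const (_ : 3 * (b - a) ^+ 2 / 16 = 3 * ((m - a) / 2) ^+ 2);
  last by rewrite /m; field.
rewrite /nrm2 /ip (_ : \int[leb]_(t in `[a, b]) (du t * du t) =
  \int[leb]_(t in `[a, m]) (du t * du t) + \int[leb]_(t in `]m, b]) (du t * du t));
  last by lra.
rewrite mulrDr (_ : \int[leb]_(t in `[a, b]) (u t * u t) =
  \int[leb]_(t in `[a, m]) (u t * u t) + \int[leb]_(t in `]m, b]) (u t * u t));
  last by lra.
exact: lerD.
Qed.

End poincare.

Arguments H10_poincare {R a b u du}.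

Section memory.
Context {R : realType}.
Local Notation leb := (@lebesgue_measure R).
Implicit Types (a b : R) (mu : R -> R) (z : state R).

Lemma measurable_fun_nrm2 a b (h : R -> R -> R) :
  measurable_fun ([set s : R | 0 < s] `*` `[a, b]) (fun p : R * R => h p.1 p.2) ->
  measurable_fun (`]0, +oo[ : set R) (fun s => nrm2 a b (h s)).
Proof.
move=> mh; set P := [set s : R | 0 < s] `*` `[a, b].
have mP : measurable P.
  apply: measurableX => //; rewrite (_ : [set s : R | 0 < s] = `]0, +oo[%classic) //.
  by apply/seteqP; split => x /=; rewrite in_itv /= andbT.
pose g := (fun p : R * R => ((h p.1 p.2) ^+ 2)%:E) \_ P.
have mg : measurable_fun setT g.
  apply/(measurable_restrictT _ _).1 => //.
  by apply/measurable_EFinP; exact: measurable_funX.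
have g0 p : (0 <= g p)%E.
  by rewrite /g /patch; case: ifP => // _; rewrite lee_fin sqr_ge0.
have mF := @measurable_fun_fubini_tonelli_F _ _ (measurableTypeR R) (measurableTypeR R) R
  leb g mg g0.
apply: (eq_measurable_fun (fun s => fine (fubini_F leb g s))).
  move=> s; rewrite inE /= in_itv /= andbT => s0.
  rewrite /fubini_F /nrm2 /ip /Rintegral [in RHS]integral_mkcond; congr fine.
  apply: eq_integral => y _; rewrite /g /patch /=.
  have -> : (((s, y) : R * R) \in P) = (y \in `[a, b]%classic).
    by apply/idP/idP => /set_mem H; apply/mem_set; [case: H|split].
  by case: ifP.
exact: measurableT_comp (measurable_funS _ (@subsetT _ _) mF).
Qed.

Lemma kernel_integrable {mu delta} : kernel_ok mu delta ->
  Rintegrable leb `]0, +oo[ mu.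
Proof. by case=> [_ [_ [_ []]]]. Qed.

Lemma inH_normM_integrable {mu delta a b z} : kernel_ok mu delta -> inH mu a b z ->
  Rintegrable leb `]0, +oo[ (fun s => mu s * nrm2 a b (st_deta z s)).
Proof.
move=> kok [_ [_ [_ [mdeta fin]]]]; have [mu0 _] := kok.
have mmu : measurable_fun (`]0, +oo[ : set R) mu.
  by case/integrableP: (kernel_integrable kok) => /measurable_EFinP.
apply/integrableP; split.
  by apply/measurable_EFinP; apply: measurable_funM => //; exact: measurable_fun_nrm2.
apply: le_lt_trans fin; apply: ge0_le_integral_nomeas => s /=.
  by rewrite lee_fin normr_ge0.
by rewrite in_itv /= andbT => s0; rewrite ger0_norm // mulr_ge0 ?mu0 // nrm2_ge0.
Qed.

Lemma normr_memory_integral_le {mu delta a b z} {g : R -> R} c0 c1 :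
  kernel_ok mu delta -> inH mu a b z ->
  (forall s, 0 < s -> `|g s| <= c0 * mu s + c1 * (mu s * nrm2 a b (st_deta z s))) ->
  `|\int[leb]_(s in `]0, +oo[) g s| <= c0 * kappa mu + c1 * normMsq mu a b z.
Proof.
move=> kok Hz gb; apply: normr_Rintegral_le_wsum => //.
- exact: kernel_integrable kok.
- exact: inH_normM_integrable kok Hz.
- by move=> s /=; rewrite in_itv /= andbT; exact: gb.
Qed.

End memory.

Lemma ip1_le_young {R : realType} {a b : R} {u du v dv : R -> R} t : a < b ->
  H10 a b u du -> H10 a b v dv -> 0 < t ->
  `|ip1 a b u du v dv| <=
    (t * tnorm1sq a b u du + (1 + poincare_const a b) * nrm2 a b dv / t) / 2.
Proof.
move=> ab Hu Hv t0.
have h0 := ip_le_young (H10_L2 ab Hu) (H10_L2 ab Hv) t0.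
have h1 := ip_le_young Hu.1 Hv.1 t0.
have hP : nrm2 a b v / t <= poincare_const a b * nrm2 a b dv / t.
  by rewrite ler_pM2r ?invr_gt0 //; exact: H10_poincare.
rewrite /ip1 /tnorm1sq mulrDl mulrDl mul1r; apply: le_trans (ler_normD _ _) _.
lra.
Qed.

Section functional.
Context {R : realType}.
Local Notation leb := (@lebesgue_measure R).
Implicit Types (a b : R) (f mu : R -> R) (z : state R).

Definition coupling mu a b z : R :=
  \int[leb]_(s in `]0, +oo[) (mu s * ip1 a b (st_u z) (st_du z) (st_eta z s) (st_deta z s))
  / Num.sqrt (kappa mu).

Lemma Lambda_coupling mu a b f eps z :
  Lambda mu a b f eps z = Lambda mu a b f 0 z - eps * coupling mu a b z.
Proof. by rewrite /Lambda /coupling /=; ring. Qed.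

Lemma normMsq_ge0 {mu delta a b z} : kernel_ok mu delta -> 0 <= normMsq mu a b z.
Proof.
case=> mu0 _; apply: Rintegral_ge0 => s /=; rewrite in_itv /= andbT => s0.
by rewrite mulr_ge0 ?mu0 ?nrm2_ge0.
Qed.

Lemma Lambda0_ge {mu delta a b f z} : a < b -> L2 a b f -> kernel_ok mu delta ->
  inH mu a b z ->
  tnorm1sq a b (st_u z) (st_du z) + normMsq mu a b z / 2 <= Lambda mu a b f 0 z.
Proof.
move=> ab Lf kok Hz; have [_ [Heta _]] := Hz; have [mu0 [_ [_ [_ [k0 _]]]]] := kok.
have LF := L2_primitive ab Lf (fun x _ => erefl (primF a f x)).
set k := kappa mu; set Q := nrm2 a b (primF a f); set B := normMsq mu a b z.
set P := \int[leb]_(s in `]0, +oo[) (mu s * ip a b (primF a f) (st_deta z s)).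
have t0 : 0 < 2 / k by rewrite divr_gt0.
have Pb : `|P| <= Q / k * k + k / 4 * B.
  apply: normr_memory_integral_le kok Hz _ => s s0.
  rewrite normrM ger0_norm ?mu0 //.
  have -> : Q / k * mu s + k / 4 * (mu s * nrm2 a b (st_deta z s)) =
      mu s * ((2 / k * Q + nrm2 a b (st_deta z s) / (2 / k)) / 2).
    by field; rewrite gt_eqF.
  by rewrite ler_wpM2l ?mu0 //; exact: ip_le_young LF (Heta s s0).1 t0.
have P2 : - (2 / k * Q) - B / 2 <= 2 / k * P.
  have -> : - (2 / k * Q) - B / 2 = 2 / k * - (Q / k * k + k / 4 * B).
    by field; rewrite gt_eqF.
  by rewrite ler_pM2l //; move: Pb; rewrite ler_norml => /andP[].
rewrite /Lambda /normHsq /= -/k -/Q -/B -/P mul0r mul0r subr0.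
lra.
Qed.

Lemma normr_coupling_le {mu delta a b z s} : a < b -> kernel_ok mu delta -> inH mu a b z ->
  0 < s -> (1 + poincare_const a b) * s ^+ 2 <= 2 ->
  s * `|coupling mu a b z| <= tnorm1sq a b (st_u z) (st_du z) + normMsq mu a b z / 2.
Proof.
move=> ab kok Hz s0 Ks; have [Hu [Heta _]] := Hz; have [mu0 [_ [_ [_ [k0 _]]]]] := kok.
set k := kappa mu; set A := tnorm1sq a b (st_u z) (st_du z); set B := normMsq mu a b z.
set K := poincare_const a b; set r := Num.sqrt k.
have r0 : 0 < r by rewrite sqrtr_gt0.
have rk : k = r ^+ 2 by rewrite sqr_sqrtr // ltW.
set t := 2 / (s * r).
have t0 : 0 < t by rewrite divr_gt0 ?mulr_gt0.
have Ib : `|\int[leb]_(x in `]0, +oo[)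
      (mu x * ip1 a b (st_u z) (st_du z) (st_eta z x) (st_deta z x))|
    <= t * A / 2 * k + (1 + K) / (2 * t) * B.
  apply: normr_memory_integral_le kok Hz _ => x x0.
  rewrite normrM ger0_norm ?mu0 //.
  have -> : t * A / 2 * mu x + (1 + K) / (2 * t) * (mu x * nrm2 a b (st_deta z x)) =
      mu x * ((t * A + (1 + K) * nrm2 a b (st_deta z x) / t) / 2).
    by field; rewrite gt_eqF.
  by rewrite ler_wpM2l ?mu0 //; exact: ip1_le_young ab Hu (Heta x x0) t0.
have B0 : 0 <= B := normMsq_ge0 kok.
rewrite /coupling -/k -/r normrM normfV (gtr0_norm r0).
apply: (@le_trans _ _ (s * ((t * A / 2 * k + (1 + K) / (2 * t) * B) / r))).
  by rewrite ler_pM2l // ler_pM2r ?invr_gt0.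
have -> : s * ((t * A / 2 * k + (1 + K) / (2 * t) * B) / r) =
    A + (1 + K) * s ^+ 2 * B / 4.
  by rewrite /t rk; field; rewrite !gt_eqF.
have : (1 + K) * s ^+ 2 * B <= 2 * B by rewrite ler_wpM2r.
lra.
Qed.

End functional.

Lemma le_div_of_scaled {R : realFieldType} (X J e al c : R) : 0 < al -> al <= e ->
  (e + al) * `|J| <= X -> X - e * J <= c / e -> X - al * J <= c / al.
Proof.
move=> al0 ale sJX; have e0 := lt_le_trans al0 ale.
rewrite !ler_pdivlMr // => /(le_trans _); apply.
have sJ : (e + al) * J <= X.
  by apply: le_trans sJX; rewrite ler_pM2l ?ler_norm ?addr_gt0.
have -> : (X - e * J) * e = (X - al * J) * al + (e - al) * (X - (e + al) * J) by ring.
by rewrite lerDl mulr_ge0 // subr_ge0.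
Qed.

Lemma omega_sqr {R : realType} {a b : R} : a < b ->
  omega a b ^+ 2 = 1 + ((b - a) / pi) ^+ 2.
Proof.
move=> ab; rewrite /omega /lambda1; have := @pi_gt0 R; move: (pi : R) => p p0.
have lam0 : 0 < (p / (b - a)) ^+ 2 by rewrite exprn_gt0 // divr_gt0 // subr_gt0.
rewrite sqr_sqrtr; last by rewrite divr_ge0 ?addr_ge0 // ltW.
by field; rewrite !gt_eqF // subr_gt0.
Qed.

Lemma omega_gt0 {R : realType} {a b : R} : a < b -> 0 < omega a b.
Proof.
move=> ab; have lam0 : 0 < lambda1 a b.
  by rewrite exprn_gt0 // divr_gt0 ?pi_gt0 // subr_gt0.
by rewrite sqrtr_gt0 divr_gt0 // addr_gt0.
Qed.

Lemma omega_sum_le {R : realFieldType} {om eps alpha : R} : 0 < om -> 0 < eps ->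
  om * eps < 1 / 2 -> alpha <= eps * (1 - om * eps) ->
  alpha <= eps /\ om * (eps + alpha) <= 3 / 4.
Proof.
move=> om0 e0 ome alE; have ome0 : 0 < om * eps by rewrite mulr_gt0.
split; first by apply: le_trans alE _; rewrite ler_piMr ?ltW //; lra.
have : om * alpha <= om * eps * (1 - om * eps) by rewrite -mulrA ler_pM2l.
nra.
Qed.

Lemma poincare_const_le_omega {R : realType} {a b : R} : a < b ->
  9 * (1 + poincare_const a b) <= 32 * omega a b ^+ 2.
Proof.
move=> ab; have pi0 := @pi_gt0 R.
have pi4 : pi < 4 :> R by have := @pihalf_lt2 R; lra.
have piL : (b - a) ^+ 2 / 16 <= ((b - a) / pi) ^+ 2.
  rewrite expr_div_n ler_pM2l ?exprn_gt0 ?subr_gt0 // lef_pV2 ?posrE ?exprn_gt0 //.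
  by rewrite expr2; nra.
by rewrite omega_sqr // /poincare_const; have := sqr_ge0 (b - a); lra.
Qed.

Lemma eps_alpha_bound {R : realType} {a b eps alpha : R} : a < b ->
  0 < eps -> eps < 1 / (2 * omega a b) ->
  0 < alpha -> alpha <= eps * (1 - omega a b * eps) ->
  alpha <= eps /\ (1 + poincare_const a b) * (eps + alpha) ^+ 2 <= 2.
Proof.
move=> ab e0 eom al0 alE; have om0 := omega_gt0 ab.
have ome : omega a b * eps < 1 / 2.
  by move: eom; rewrite ltr_pdivlMr ?mulr_gt0 // mul1r; lra.
have [al_le s34] := omega_sum_le om0 e0 ome alE; split => //.
have s2 : omega a b ^+ 2 * (eps + alpha) ^+ 2 <= 9 / 16.
  rewrite -exprMn; have : 0 <= omega a b * (eps + alpha) by rewrite mulr_ge0 ?addr_ge0 ?ltW.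
  nra.
have := poincare_const_le_omega ab; have := sqr_ge0 (eps + alpha).
move: s2; set S := (eps + alpha) ^+ 2; set W := omega a b ^+ 2.
set K := poincare_const a b; nra.
Qed.

Theorem lemma8p3 (R : realType) (a b : R) (f mu : R -> R)
  (delta c1 c2 c3 eps0 eps alpha : R) :
  a < b -> L2 a b f -> kernel_ok mu delta ->
  0 < c1 -> 0 < c2 -> 0 < c3 ->
  0 < eps0 -> eps0 < 1 / (2 * omega a b) ->
  normF a b f < c1 / (2 * Num.sqrt (c2 * c3)) ->
  0 < eps <= eps0 ->
  0 < alpha <= eps * (1 - omega a b * eps) ->
  Dset mu a b f c1 c2 c3 eps `<=` Dset mu a b f c1 c2 c3 alpha.
Proof.
move=> ab Lf kok _ _ _ _ eps0_lt _ /andP[eps_gt0 eps_le] /andP[alpha_gt0 alphaE] z [Hz Lz].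
split => //.
have [alpha_le Ks] := eps_alpha_bound ab eps_gt0 (le_lt_trans eps_le eps0_lt) alpha_gt0 alphaE.
move: Lz; rewrite (Lambda_coupling mu a b f eps) (Lambda_coupling mu a b f alpha).
apply: le_div_of_scaled => //.
apply: le_trans (Lambda0_ge ab Lf kok Hz).
exact: normr_coupling_le ab kok Hz (addr_gt0 eps_gt0 alpha_gt0) Ks.
Qed.
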